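(* Let $\tau$ be a countable relational signature and let $\mathcal{F}=\langle R_i:i<\omega\rangle$ be a countable family of relations on $\mathbb{N}$ (each of finite arity). Let $\mathrm{Aut}(\mathcal{F})$ be the group of permutations $g$ of $\mathbb{N}$ with $g(R_i)=R_i$ for all $i$. Then every $\mathrm{Aut}(\mathcal{F})$-invariant Borel subset of $X_\tau$ is definable in $\mathscr{L}_{\omega_1\omega}(\mathcal{F})$.
   Context: For a countable relational signature $\tau$ in which each $R\in\tau$ has finite arity $a(R)$, the logic space is $X_\tau=\prod_{R\in\tau}2^{\mathbb{N}^{a(R)}}$ with the product topology; its elements are $\tau$-structures with universe $\mathbb{N}$. A permutation $g$ of $\mathbb{N}$ acts on tuples coordinatewise, on subsets of $\mathbb{N}^k$ by $g(A)=\{g(a):a\in A\}$, and on $X_\tau$ by $R^{g(M)}=g(R^M)$ for each $R\in\tau$. For a group $G$ of permutations, $A\subseteq X_\tau$ is $G$-invariant if $g(A)=A$ for all $g\in G$. $\mathscr{L}_{\omega_1\omega}(\mathcal{F})$ is the infinitary logic with countable conjunctions and disjunctions and finite strings of ordinary quantifiers, in the signature $\tau$ together with a symbol for each $R_i$ with fixed interpretation $R_i$. A set $A\subseteq X_\tau$ is definable in it if there is a sentence $\varphi$ with $M\in A\iff M\models\varphi$ for all $M\in X_\tau$. *)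

From Stdlib Require List.
From mathcomp Require Import all_boot.
Set Implicit Arguments. Unset Strict Implicit. Unset Printing Implicit Defensive.

Section Logic.

Variable I : Type.
Variable ar : I -> nat.

Variable b : nat -> nat.
Variable F : forall i : nat, (b i).-tuple nat -> Prop.

(* The logic space X_tau = prod_{R in tau} 2^(N^(ar R)); a point assigns to
   each symbol R a subset of N^(ar R), represented as a predicate. *)
Definition X := forall R : I, (ar R).-tuple nat -> Prop.

(* Product topology (of discrete 2's): U is open iff every point of U has
   a basic neighbourhood (determined by finitely many coordinates) inside U. *)
Definition coord := {R : I & (ar R).-tuple nat}.

Definition is_open (U : X -> Prop) : Prop :=
  forall M, U M -> exists l : list coord,
    forall M', (forall p, List.In p l -> (M' (projT1 p) (projT2 p) <-> M (projT1 p) (projT2 p))) ->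
               U M'.

Inductive Borel : (X -> Prop) -> Prop :=
| Borel_open U : is_open U -> Borel U
| Borel_compl A : Borel A -> Borel (fun M => ~ A M)
| Borel_cunion (A : nat -> X -> Prop) :
    (forall n, Borel (A n)) -> Borel (fun M => exists n, A n M).

Definition is_perm (g : nat -> nat) : Prop := bijective g.

Definition img_rel k (g : nat -> nat) (A : k.-tuple nat -> Prop) : k.-tuple nat -> Prop :=
  fun t => exists a, A a /\ t = map_tuple g a.

Definition in_Aut (g : nat -> nat) : Prop :=
  is_perm g /\ forall i (t : (b i).-tuple nat), img_rel g (@F i) t <-> F t.

Definition act (g : nat -> nat) (M : X) : X :=
  fun R t => img_rel g (M R) t.

Definition img_set (g : nat -> nat) (A : X -> Prop) : X -> Prop :=
  fun M => exists N, A N /\ M = act g N.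

Definition Aut_invariant (A : X -> Prop) : Prop :=
  forall g, in_Aut g -> forall M, img_set g A M <-> A M.

Inductive formula : Type :=
| fRel (R : I) (vs : (ar R).-tuple nat)
| fFam (i : nat) (vs : (b i).-tuple nat)
| fEq (x y : nat)
| fNot (phi : formula)
| fAnd (phis : nat -> formula)
| fOr (phis : nat -> formula)
| fEx (x : nat) (phi : formula)
| fAll (x : nat) (phi : formula).

Inductive free : nat -> formula -> Prop :=
| free_Rel x R vs : x \in tval vs -> free x (@fRel R vs)
| free_Fam x i vs : x \in tval vs -> free x (@fFam i vs)
| free_Eq1 x y : free x (fEq x y)
| free_Eq2 x y : free y (fEq x y)
| free_Not x phi : free x phi -> free x (fNot phi)
| free_And x phis n : free x (phis n) -> free x (fAnd phis)
| free_Or x phis n : free x (phis n) -> free x (fOr phis)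
| free_Ex x y phi : free x phi -> x <> y -> free x (fEx y phi)
| free_All x y phi : free x phi -> x <> y -> free x (fAll y phi).

Definition sentence (phi : formula) : Prop := forall x, ~ free x phi.

Definition upd (s : nat -> nat) (x v : nat) : nat -> nat :=
  fun y => if y == x then v else s y.

Fixpoint sat (M : X) (s : nat -> nat) (phi : formula) {struct phi} : Prop :=
  match phi with
  | fRel R vs => M R (map_tuple s vs)
  | fFam i vs => F (map_tuple s vs)
  | fEq x y => s x = s y
  | fNot psi => ~ sat M s psi
  | fAnd phis => forall n, sat M s (phis n)
  | fOr phis => exists n, sat M s (phis n)
  | fEx x psi => exists v, sat M (upd s x v) psi
  | fAll x psi => forall v, sat M (upd s x v) psi
  end.

(* M |= phi for a sentence phi (the assignment is irrelevant; we use the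
   constant 0 assignment). *)
Definition models (M : X) (phi : formula) : Prop := sat M (fun _ => 0) phi.

Definition definable (A : X -> Prop) : Prop :=
  exists phi, sentence phi /\ forall M, A M <-> models M phi.

End Logic.

Definition countable_type (I : Type) : Prop :=
  exists enc : I -> nat, injective enc.

(* Vaught transforms over the back-and-forth system of (N, F).  Back-and-forth
   equivalence of finite tuples, defined along Brouwer ordinals, is expressible in
   L_{omega_1 omega}(F), and one countable stage [lam] already implies all others,
   so [lam]-equivalence is a back-and-forth system containing the graph of every
   automorphism.  Pairs of [lam]-equivalent tuples are forcing conditions for an
   automorphism g, and any countably many dense requirements are met by an
   automorphism built back and forth.  By induction on Borel sets B one finds
   formulas [Psi xs] such that, for every structure M and generic g, g^-1 M lies in
   B iff some condition (xs, g xs) satisfies M |= Psi xs [g xs]; complements are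
   handled by "no extension satisfies Psi".  For invariant A, M lies in A iff
   g^-1 M does, i.e. iff some condition (xs, ys) has M |= Psi xs [ys], which is an
   L_{omega_1 omega}(F) sentence. *)

From mathcomp Require Import all_boot.
From Stdlib Require Import Classical ClassicalEpsilon.
From Stdlib Require Import FunctionalExtensionality PropExtensionality Eqdep.
Set Implicit Arguments. Unset Strict Implicit. Unset Printing Implicit Defensive.

Section Vaught.
Variables (I : Type) (ar : I -> nat) (b : nat -> nat).
Variable F : forall i : nat, (b i).-tuple nat -> Prop.

Local Notation form := (formula ar b).
Local Notation sat := (@sat I ar b F).

Definition env (ys : seq nat) : nat -> nat := nth 0 ys.

Definition fTrue : form := fAll 0 (fEq ar b 0 0).
Definition fFalse : form := fNot fTrue.
Definition fAnd2 (p q : form) : form := fAnd (fun n => if n is 0 then p else q).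
Definition fOr2 (p q : form) : form := fOr (fun n => if n is 0 then p else q).
Definition fImp (p q : form) : form := fOr2 (fNot p) q.

Fixpoint fAlls (k m : nat) (phi : form) : form :=
  if m is m'.+1 then fAll k (fAlls k.+1 m' phi) else phi.
Fixpoint fExs (k m : nat) (phi : form) : form :=
  if m is m'.+1 then fEx k (fExs k.+1 m' phi) else phi.

Lemma sat_False M s : ~ sat M s fFalse.
Proof. by apply. Qed.

Lemma sat_And M s ps : sat M s (fAnd ps) <-> forall n, sat M s (ps n).
Proof. by []. Qed.

Lemma sat_Or M s ps : sat M s (fOr ps) <-> exists n, sat M s (ps n).
Proof. by []. Qed.

Lemma sat_And2 M s p q : sat M s (fAnd2 p q) <-> sat M s p /\ sat M s q.
Proof. by split=> [H | [Hp Hq] [|n]]; [split; [apply: (H 0) | apply: (H 1)] | |]. Qed.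

Lemma sat_Or2 M s p q : sat M s (fOr2 p q) <-> sat M s p \/ sat M s q.
Proof. by split=> [[[|n] H] | [H | H]]; [left | right | exists 0 | exists 1]. Qed.

Lemma sat_Imp M s p q : sat M s (fImp p q) <-> (sat M s p -> sat M s q).
Proof.
rewrite sat_Or2; split=> [[Hnp | Hq] Hp // | H].
by case: (classic (sat M s p)) => Hp; [right; apply: H | left].
Qed.

Lemma upd_env ys v : upd (env ys) (size ys) v = env (rcons ys v).
Proof.
apply: functional_extensionality => y; rewrite /upd /env nth_rcons.
by case: ltngtP => // /ltnW le; rewrite nth_default.
Qed.

Lemma sat_Ex_env M ys p :
  sat M (env ys) (fEx (size ys) p) <-> exists v, sat M (env (rcons ys v)) p.
Proof. by split=> -[v H]; exists v; move: H; rewrite upd_env. Qed.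

Lemma sat_All_env M ys p :
  sat M (env ys) (fAll (size ys) p) <-> forall v, sat M (env (rcons ys v)) p.
Proof. by split=> H v; move: (H v); rewrite upd_env. Qed.

Lemma sat_Alls M ys m phi :
  sat M (env ys) (fAlls (size ys) m phi) <->
  forall vs, size vs = m -> sat M (env (ys ++ vs)) phi.
Proof.
elim: m ys => [|m IH] ys.
  by split=> [H [|//] _ | H]; [rewrite cats0 | have := H [::] erefl; rewrite cats0].
rewrite sat_All_env; split=> [H [//|v vs] [Hs] | H v].
  by move: (H v); rewrite -(size_rcons ys v) IH => /(_ vs Hs); rewrite cat_rcons.
by rewrite -(size_rcons ys v) IH => vs Hs; rewrite cat_rcons; apply: H; rewrite /= Hs.
Qed.

Lemma sat_Exs M ys m phi :
  sat M (env ys) (fExs (size ys) m phi) <->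
  exists vs, size vs = m /\ sat M (env (ys ++ vs)) phi.
Proof.
elim: m ys => [|m IH] ys.
  split=> [H | [vs [/size0nil -> H]]]; first by exists [::]; rewrite cats0.
  by rewrite cats0 in H.
rewrite sat_Ex_env; split.
  case=> v; rewrite -(size_rcons ys v) IH => -[vs [Hs H]].
  by exists (v :: vs); rewrite -cat_rcons /= Hs.
case=> -[|v vs] [Hs H] //; case: Hs => Hs; exists v.
by rewrite -(size_rcons ys v) IH; exists vs; rewrite cat_rcons.
Qed.

Definition bounded (k : nat) (phi : form) := forall x, free x phi -> x < k.

Lemma bounded_True k : bounded k fTrue.
Proof. by move=> x Hx; inversion Hx as [| | | | | | | |x' y p Hf Hne]; inversion Hf. Qed.

Lemma bounded_Not k p : bounded k p -> bounded k (fNot p).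
Proof. by move=> H x Hx; inversion Hx; apply: H. Qed.

Lemma bounded_False k : bounded k fFalse.
Proof. exact/bounded_Not/bounded_True. Qed.

Lemma bounded_And k ps : (forall n, bounded k (ps n)) -> bounded k (fAnd ps).
Proof. by move=> H x Hx; inversion Hx; apply: H; eassumption. Qed.

Lemma bounded_Or k ps : (forall n, bounded k (ps n)) -> bounded k (fOr ps).
Proof. by move=> H x Hx; inversion Hx; apply: H; eassumption. Qed.

Lemma bounded_And2 k p q : bounded k p -> bounded k q -> bounded k (fAnd2 p q).
Proof. by move=> Hp Hq; apply: bounded_And => -[|n]. Qed.

Lemma bounded_Imp k p q : bounded k p -> bounded k q -> bounded k (fImp p q).
Proof. by move=> Hp Hq; apply: bounded_Or => -[|n] //; apply: bounded_Not. Qed.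

Lemma bounded_Ex k p : bounded k.+1 p -> bounded k (fEx k p).
Proof.
move=> H x Hx; inversion Hx as [| | | | | | |x' y p' Hf Hne|]; subst.
by move: (H _ Hf); rewrite ltnS leq_eqVlt => /orP[/eqP|].
Qed.

Lemma bounded_All k p : bounded k.+1 p -> bounded k (fAll k p).
Proof.
move=> H x Hx; inversion Hx as [| | | | | | | |x' y p' Hf Hne]; subst.
by move: (H _ Hf); rewrite ltnS leq_eqVlt => /orP[/eqP|].
Qed.

Lemma bounded_Alls k m p : bounded (k + m) p -> bounded k (fAlls k m p).
Proof.
elim: m k => [|m IH] k /=; first by rewrite addn0.
by rewrite -addSnnS => /IH /bounded_All.
Qed.

Lemma bounded_Exs k m p : bounded (k + m) p -> bounded k (fExs k m p).
Proof.
elim: m k => [|m IH] k /=; first by rewrite addn0.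
by rewrite -addSnnS => /IH /bounded_Ex.
Qed.

Lemma bounded_Eq k x y : x < k -> y < k -> bounded k (fEq ar b x y).
Proof. by move=> Hx Hy z Hz; inversion Hz; subst. Qed.

Lemma bounded_Fam k i (vs : (b i).-tuple nat) :
  all (fun j => j < k) vs -> bounded k (@fFam I ar b i vs).
Proof.
move=> H x Hx; inversion Hx; subst.
match goal with E : existT _ _ _ = existT _ _ _ |- _ => move: (inj_pair2 _ _ _ _ _ E) => Evs end.
by subst; apply: (allP H).
Qed.

Lemma bounded_Rel k R (vs : (ar R).-tuple nat) :
  all (fun j => j < k) vs -> bounded k (@fRel I ar b R vs).
Proof.
move=> H x Hx; inversion Hx; subst.
match goal with E : existT _ _ _ = existT _ _ _ |- _ => move: (inj_pair2 _ _ _ _ _ E) => Evs end.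
by subst; apply: (allP H).
Qed.

Lemma map_tupleK n f g : cancel f g -> cancel (@map_tuple n nat nat f) (map_tuple g).
Proof. by move=> fK t; apply: val_inj; rewrite /= -map_comp (eq_map fK) map_id. Qed.

Lemma map_tuple_id n (t : n.-tuple nat) : map_tuple id t = t.
Proof. by apply: val_inj; rewrite /= map_id. Qed.

Lemma map_tuple_comp n (f g : nat -> nat) (t : n.-tuple nat) :
  map_tuple g (map_tuple f t) = map_tuple (g \o f) t.
Proof. by apply: val_inj; rewrite /= map_comp. Qed.

Lemma Aut_F g : in_Aut F g -> forall i (u : (b i).-tuple nat), F (map_tuple g u) <-> F u.
Proof.
move=> [[h gK _] HF] i u; rewrite -HF; split=> [[v [Hv /(can_inj (map_tupleK gK)) ->]] | Hu] //.
by exists u.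
Qed.

Lemma in_AutP g h : cancel g h -> cancel h g ->
  (forall i (u : (b i).-tuple nat), F (map_tuple g u) <-> F u) -> in_Aut F g.
Proof.
move=> gK hK HF; split=> [|i t]; first by exists h.
split=> [[u [Hu ->]] | Ht]; first exact/HF.
by exists (map_tuple h t); rewrite -HF map_tupleK.
Qed.

Lemma Aut_id : in_Aut F id.
Proof. by apply: (in_AutP (h := id)) => // i u; rewrite map_tuple_id. Qed.

Definition pullback g (M : X ar) : X ar := fun R t => M R (map_tuple g t).

Lemma pullbackK g h M : cancel h g -> pullback h (pullback g M) = M.
Proof.
move=> hK; apply: functional_extensionality_dep => R; apply: functional_extensionality => t.
by rewrite /pullback map_tupleK.
Qed.

Lemma pullback_act g h M : cancel g h -> cancel h g -> pullback g M = act h M.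
Proof.
move=> gK hK; apply: functional_extensionality_dep => R; apply: functional_extensionality => t.
apply: propositional_extensionality; split=> [HM | [u [Hu ->]]].
  by exists (map_tuple g t); rewrite map_tupleK.
by rewrite /pullback map_tupleK.
Qed.

Lemma Aut_invariant_pullback A g M : Aut_invariant F A -> in_Aut F g ->
  A (pullback g M) <-> A M.
Proof.
move=> HA Hg; have [[h gK hK] _] := Hg.
have Hh : in_Aut F h by apply: (in_AutP hK gK) => i u; rewrite -(Aut_F Hg) map_tupleK.
rewrite (pullback_act M gK hK); split=> [/(HA h Hh) [N [HN EN]] | HM]; last first.
  by apply/(HA h Hh); exists M.
move: EN; rewrite -!(pullback_act _ gK hK) => /(congr1 (pullback h)).
by rewrite !pullbackK // => ->.
Qed.

(** * Back-and-forth equivalence of tuples *)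

Definition atomic_equiv (xs ys : seq nat) : Prop :=
  size xs = size ys /\
  (forall j k, j < size xs -> k < size xs ->
     (nth 0 xs j == nth 0 xs k) = (nth 0 ys j == nth 0 ys k)) /\
  (forall i (u : (b i).-tuple nat), all (fun j => j < size xs) u ->
     F (map_tuple (nth 0 xs) u) <-> F (map_tuple (nth 0 ys) u)).

Inductive brouwer := BZero | BSucc of brouwer | BLim of (nat -> brouwer).

Fixpoint bf_equiv (o : brouwer) (xs ys : seq nat) : Prop :=
  match o with
  | BZero => atomic_equiv xs ys
  | BSucc o => bf_equiv o xs ys /\
      (forall c, exists d, bf_equiv o (rcons xs c) (rcons ys d)) /\
      (forall d, exists c, bf_equiv o (rcons xs c) (rcons ys d))
  | BLim f => forall n, bf_equiv (f n) xs ys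
  end.

Lemma bf_equiv_atomic o xs ys : bf_equiv o xs ys -> atomic_equiv xs ys.
Proof. by elim: o xs ys => [|o IH|f IH] xs ys //= => [[/IH]|/(_ 0)/IH]. Qed.

Lemma bf_equiv_size o xs ys : bf_equiv o xs ys -> size xs = size ys.
Proof. by case/bf_equiv_atomic. Qed.

Lemma map_tuple_nth_map n (zs pi : seq nat) (u : n.-tuple nat) :
  all (fun j => j < size pi) u ->
  map_tuple (nth 0 zs) (map_tuple (nth 0 pi) u) = map_tuple (nth 0 (map (nth 0 zs) pi)) u.
Proof.
move=> Hu; apply: val_inj; rewrite /= -map_comp; apply/eq_in_map => j Hj /=.
by rewrite (nth_map 0) //; apply: (allP Hu).
Qed.

Lemma atomic_equiv_reindex xs ys pi : atomic_equiv xs ys -> all (fun j => j < size xs) pi ->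
  atomic_equiv (map (nth 0 xs) pi) (map (nth 0 ys) pi).
Proof.
move=> [Hs [He Hf]] Hpi; have in_xs j : j < size pi -> nth 0 pi j < size xs.
  by move=> Hj; apply: (allP Hpi); apply: mem_nth.
split; first by rewrite !size_map.
split=> [j k | i u]; rewrite size_map => Hj.
  by move=> Hk; rewrite !(nth_map 0) // He ?in_xs.
have Hu : all (fun j => j < size xs) (map_tuple (nth 0 pi) u).
  by apply/allP => x /mapP [j /(allP Hj) /in_xs ? ->].
by rewrite -!map_tuple_nth_map //; apply: Hf.
Qed.

Lemma map_nth_rcons (xs pi : seq nat) c : all (fun j => j < size xs) pi ->
  map (nth 0 (rcons xs c)) (rcons pi (size xs)) = rcons (map (nth 0 xs) pi) c.
Proof.
move=> Hpi; rewrite map_rcons nth_rcons ltnn eqxx; congr rcons.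
by apply/eq_in_map => j /(allP Hpi) lt; rewrite nth_rcons lt.
Qed.

Lemma all_rcons_size (xs pi : seq nat) c : all (fun j => j < size xs) pi ->
  all (fun j => j < size (rcons xs c)) (rcons pi (size xs)).
Proof.
move=> Hpi; rewrite all_rcons size_rcons ltnSn /=.
by apply/allP => j /(allP Hpi) /ltnW.
Qed.

Lemma bf_equiv_reindex o xs ys pi : bf_equiv o xs ys -> all (fun j => j < size xs) pi ->
  bf_equiv o (map (nth 0 xs) pi) (map (nth 0 ys) pi).
Proof.
elim: o xs ys pi => [|o IH|f IH] xs ys pi /=; first exact: atomic_equiv_reindex.
  move=> [H [Hforth Hback]] Hpi; have Hs := bf_equiv_size H.
  have ext c d : bf_equiv o (rcons xs c) (rcons ys d) ->
      bf_equiv o (rcons (map (nth 0 xs) pi) c) (rcons (map (nth 0 ys) pi) d).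
    by move=> /IH /(_ (all_rcons_size c Hpi)); rewrite map_nth_rcons // Hs map_nth_rcons -?Hs.
  split; first exact: IH.
  split=> [c | d]; first by have [d /ext Hd] := Hforth c; exists d.
  by have [c /ext Hd] := Hback d; exists c.
by move=> H Hpi n; apply: IH.
Qed.

Lemma bf_equiv_Aut g o xs : in_Aut F g -> bf_equiv o xs (map g xs).
Proof.
move=> Hg; have [[h gh hg] _] := Hg; have g_inj := can_inj gh.
elim: o xs => [|o IH|f IH] xs /=; last by [].
  split; first by rewrite size_map.
  split=> [j k Hj Hk | i u Hu]; first by rewrite !(nth_map 0) // (inj_eq g_inj).
  have -> : map_tuple (nth 0 (map g xs)) u = map_tuple g (map_tuple (nth 0 xs) u).
    apply: val_inj; rewrite /= -map_comp; apply/eq_in_map => j /(allP Hu) Hj /=.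
    by rewrite (nth_map 0).
  by rewrite (Aut_F Hg).
split; first exact: IH.
split=> [c | d]; first by exists (g c); rewrite -map_rcons.
by exists (h d); rewrite -{2}(hg d) -map_rcons.
Qed.

(** The supremum of one separating stage for each of the countably many
    non-equivalent pairs. *)
Lemma bf_equiv_stable : exists lam, forall xs ys, bf_equiv lam xs ys -> forall o, bf_equiv o xs ys.
Proof.
pose separates (p : seq nat * seq nat) o :=
  (forall o', bf_equiv o' p.1 p.2) \/ ~ bf_equiv o p.1 p.2.
have [w Hw] : exists w, forall p, separates p (w p).
  apply: choice => p.
  case: (classic (forall o, bf_equiv o p.1 p.2)) => [H | /not_all_ex_not [o Ho]].
    by exists BZero; left.
  by exists o; right.
exists (BLim (fun n => if unpickle n is Some p then w p else BZero)) => xs ys H.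
by case: (Hw (xs, ys)) => //; move: (H (pickle (xs, ys))); rewrite /= pickleK.
Qed.

Definition atomic_type_formula (xs : seq nat) : form :=
  fAnd (fun n => match @unpickle ((nat * nat) + (nat * seq nat))%type n with
   | Some (inl (j, k)) =>
       if (j < size xs) && (k < size xs) then
         if nth 0 xs j == nth 0 xs k then fEq ar b j k else fNot (fEq ar b j k)
       else fTrue
   | Some (inr (i, u)) =>
       if insub u : option ((b i).-tuple nat) is Some t then
         if all (fun j => j < size xs) t then
           if excluded_middle_informative (F (map_tuple (nth 0 xs) t))
           then @fFam I ar b i t else fNot (@fFam I ar b i t)
         else fTrue
       else fTrue
   | None => fTrue
   end).

Fixpoint bf_formula (o : brouwer) (xs : seq nat) : form :=
  match o with
  | BZero => atomic_type_formula xs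
  | BSucc o => fAnd2 (bf_formula o xs)
      (fAnd2 (fAnd (fun c => fEx (size xs) (bf_formula o (rcons xs c))))
             (fAll (size xs) (fOr (fun c => bf_formula o (rcons xs c)))))
  | BLim f => fAnd (fun n => bf_formula (f n) xs)
  end.

Lemma bounded_atomic_type_formula xs : bounded (size xs) (atomic_type_formula xs).
Proof.
apply: bounded_And => n; case: unpickle => [[[j k] | [i u]] | ]; try exact: bounded_True.
  case: ifP => [/andP [Hj Hk] | _]; last exact: bounded_True.
  by case: ifP => _; [ | apply: bounded_Not]; apply: bounded_Eq.
case: insub => [t | ]; last exact: bounded_True.
case: ifP => [Ht | _]; last exact: bounded_True.
by case: excluded_middle_informative => HF /=; [ | apply: bounded_Not]; apply: bounded_Fam.
Qed.

Lemma bounded_bf_formula o xs : bounded (size xs) (bf_formula o xs).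
Proof.
elim: o xs => [|o IH|f IH] xs /=; first exact: bounded_atomic_type_formula.
  apply: bounded_And2 => //; apply: bounded_And2.
    by apply: bounded_And => c; apply: bounded_Ex; rewrite -(size_rcons xs c).
  by apply: bounded_All; apply: bounded_Or => c; rewrite -(size_rcons xs c).
by apply: bounded_And.
Qed.

Lemma sat_atomic_type_formula M xs ys : size ys = size xs ->
  sat M (env ys) (atomic_type_formula xs) <-> atomic_equiv xs ys.
Proof.
move=> Hs; split=> [H | [_ [He Hf]] n].
  split=> //; split=> [j k Hj Hk | i u Hu].
    move: (H (pickle (@inl _ (nat * seq nat) (j, k)))); rewrite pickleK Hj Hk /=.
    rewrite /env; case: eqP => _ /= => [-> | /eqP /negbTE ->]; by rewrite ?eqxx.
  move: (H (pickle (@inr (nat * nat) _ (i, val u)))); rewrite pickleK /= valK Hu.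
  by case: excluded_middle_informative => HF /= Hsat; split=> // /HF.
case: unpickle => [[[j k] | [i u]] | ] //.
  case: ifP => [/andP [Hj Hk] | _] //.
  by rewrite (He _ _ Hj Hk); case: eqP.
case: insub => [t | ] //; case: ifP => [Ht | _] //.
by case: excluded_middle_informative => HF /=; rewrite -(Hf _ _ Ht).
Qed.

Lemma sat_bf_formula M o xs ys : size ys = size xs ->
  sat M (env ys) (bf_formula o xs) <-> bf_equiv o xs ys.
Proof.
elim: o xs ys => [|o IH|f IH] xs ys Hs; first exact: sat_atomic_type_formula.
  have Hs' c d : size (rcons ys d) = size (rcons xs c) by rewrite !size_rcons Hs.
  rewrite [bf_formula _ _]/= !sat_And2 IH // -Hs sat_All_env.
  split=> -[H1 [H2 H3]]; split=> //; split.
  - by move=> c; have /sat_Ex_env [d Hd] := H2 c; exists d; apply/(IH _ _ (Hs' c d)).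
  - by move=> d; have [c Hc] := H3 d; exists c; apply/(IH _ _ (Hs' c d)).
  - by move=> c; apply/sat_Ex_env; have [d Hd] := H2 c; exists d; apply/(IH _ _ (Hs' c d)).
  - by move=> d; have [c Hc] := H3 d; exists c; apply/(IH _ _ (Hs' c d)).
by split=> H n; apply/(IH n xs ys Hs); apply: H.
Qed.

(** * Generic automorphisms *)

Lemma nth_prefix (s1 s2 : seq nat) j : prefix s1 s2 -> j < size s1 -> nth 0 s2 j = nth 0 s1 j.
Proof. by move=> /prefixP [s ->] Hj; rewrite nth_cat Hj. Qed.

Lemma mem_prefix (s1 s2 : seq nat) x : prefix s1 s2 -> x \in s1 -> x \in s2.
Proof. by move=> /prefixP [s ->] Hx; rewrite mem_cat Hx. Qed.

Section Forcing.
Variable lam : brouwer.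
Hypothesis lam_stable : forall xs ys, bf_equiv lam xs ys -> forall o, bf_equiv o xs ys.

(** Forcing conditions are pairs of [lam]-equivalent tuples [xs], [ys], read as
    the finite partial maps [xs_j |-> ys_j]; requirements are predicates on them. *)
Local Notation cond := (bf_equiv lam).

Lemma cond_forth xs ys c : cond xs ys -> exists d, cond (rcons xs c) (rcons ys d).
Proof. by move=> /lam_stable /(_ (BSucc lam)) [_ [H _]]. Qed.

Lemma cond_back xs ys d : cond xs ys -> exists c, cond (rcons xs c) (rcons ys d).
Proof. by move=> /lam_stable /(_ (BSucc lam)) [_ [_ H]]. Qed.

Definition dense (Q : seq nat -> seq nat -> Prop) :=
  forall xs ys, cond xs ys -> exists a vs, cond (xs ++ a) (ys ++ vs) /\ Q (xs ++ a) (ys ++ vs).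

Definition meets (g : nat -> nat) (Q : seq nat -> seq nat -> Prop) := exists xs, Q xs (map g xs).

Section GenericChain.
Variable D : nat -> seq nat -> seq nat -> Prop.
Hypothesis D_dense : forall n, dense (D n).
Variables xs0 ys0 : seq nat.
Hypothesis cond0 : cond xs0 ys0.

(** Besides the [D k], the chain must put every [x] into the domain and the
    range, so that its union is the graph of a permutation. *)
Definition requirement (n : nat) : seq nat -> seq nat -> Prop :=
  match @unpickle (nat + nat)%type n with
  | Some (inl k) => D k
  | Some (inr x) => fun xs ys => x \in xs /\ x \in ys
  | None => fun _ _ => True
  end.

Lemma dense_requirement n : dense (requirement n).
Proof.
rewrite /requirement; case: unpickle => [[k | x] | ] xs ys Hc; first exact: D_dense.
  have [d Hd] := cond_forth x Hc; have [c Hc'] := cond_back x Hd.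
  exists [:: x; c], [:: d; x]; rewrite -!cats1 -!catA in Hc'; split=> //.
  by rewrite !mem_cat !inE !eqxx !orbT.
by exists [::], [::]; rewrite !cats0.
Qed.

Lemma extension_ex n (p : seq nat * seq nat) : exists q : seq nat * seq nat,
  cond p.1 p.2 -> [/\ cond q.1 q.2, prefix p.1 q.1, prefix p.2 q.2 & requirement n q.1 q.2].
Proof.
case: (classic (cond p.1 p.2)) => [/dense_requirement Hp | Hp]; last by exists p.
have [a [vs [Hc Hreq]]] := Hp n; exists (p.1 ++ a, p.2 ++ vs) => _.
by split=> //; apply: prefix_prefix.
Qed.

Definition extension n p := proj1_sig (constructive_indefinite_description _ (extension_ex n p)).

Lemma extensionP n p : cond p.1 p.2 -> let q := extension n p in
  [/\ cond q.1 q.2, prefix p.1 q.1, prefix p.2 q.2 & requirement n q.1 q.2].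
Proof. exact: (proj2_sig (constructive_indefinite_description _ (extension_ex n p))). Qed.

Fixpoint chain (n : nat) : seq nat * seq nat :=
  if n is m.+1 then extension m (chain m) else (xs0, ys0).

Lemma chain_cond n : cond (chain n).1 (chain n).2.
Proof.
by elim: n => [|n IH] //=; case: (extensionP n IH).
Qed.

Lemma chain_requirement n : requirement n (chain n.+1).1 (chain n.+1).2.
Proof. by case: (extensionP n (chain_cond n)). Qed.

Lemma chain_mono m n : m <= n -> prefix (chain m).1 (chain n).1 && prefix (chain m).2 (chain n).2.
Proof.
apply: (homo_leq (r := fun p q => prefix p.1 q.1 && prefix p.2 q.2)) => [p | q p r | k].
- by rewrite !prefix_refl.
- by move=> /andP [Hpq1 Hpq2] /andP [Hqr1 Hqr2]; rewrite (prefix_trans Hpq1) ?(prefix_trans Hpq2).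
- by case: (extensionP k (chain_cond k)) => _ -> ->.
Qed.

Lemma size_chain n : size (chain n).1 = size (chain n).2.
Proof. exact: bf_equiv_size (chain_cond n). Qed.

Lemma chain_nth_eq m m' j k : j < size (chain m).1 -> k < size (chain m').1 ->
  (nth 0 (chain m).1 j == nth 0 (chain m').1 k) = (nth 0 (chain m).2 j == nth 0 (chain m').2 k).
Proof.
move=> Hj Hk; set N := maxn m m'.
have /andP [Hm1 Hm2] := chain_mono (leq_maxl m m').
have /andP [Hm'1 Hm'2] := chain_mono (leq_maxr m m').
have [_ [He _]] := bf_equiv_atomic (chain_cond N).
rewrite -(nth_prefix Hm1 Hj) -(nth_prefix Hm'1 Hk) He; last 2 first.
- exact: leq_trans Hj (size_prefix Hm1).
- exact: leq_trans Hk (size_prefix Hm'1).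
by rewrite (nth_prefix Hm2) -?size_chain // (nth_prefix Hm'2) -?size_chain.
Qed.

Definition stage x := (pickle (inr x : nat + nat)).+1.

Lemma mem_chain_stage x : x \in (chain (stage x)).1 /\ x \in (chain (stage x)).2.
Proof. by have := chain_requirement (pickle (inr x : nat + nat)); rewrite /requirement pickleK. Qed.

Definition generic_map x := nth 0 (chain (stage x)).2 (index x (chain (stage x)).1).
Definition generic_inv y := nth 0 (chain (stage y)).1 (index y (chain (stage y)).2).

Lemma generic_map_nth m j : j < size (chain m).1 ->
  generic_map (nth 0 (chain m).1 j) = nth 0 (chain m).2 j.
Proof.
move=> Hj; have [Hx _] := mem_chain_stage (nth 0 (chain m).1 j).
by apply/eqP; rewrite -chain_nth_eq ?index_mem // nth_index.
Qed.

Lemma generic_inv_nth m j : j < size (chain m).2 ->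
  generic_inv (nth 0 (chain m).2 j) = nth 0 (chain m).1 j.
Proof.
move=> Hj; have [_ Hy] := mem_chain_stage (nth 0 (chain m).2 j).
by apply/eqP; rewrite chain_nth_eq ?size_chain ?index_mem // nth_index.
Qed.

Lemma map_generic_map m : map generic_map (chain m).1 = (chain m).2.
Proof.
apply: (@eq_from_nth _ 0); first by rewrite size_map size_chain.
by move=> j; rewrite size_map => Hj; rewrite (nth_map 0) // generic_map_nth.
Qed.

Lemma generic_mapK : cancel generic_map generic_inv.
Proof.
move=> x; have [Hx _] := mem_chain_stage x.
by rewrite /generic_map generic_inv_nth ?nth_index // -size_chain index_mem.
Qed.

Lemma generic_invK : cancel generic_inv generic_map.
Proof.
move=> y; have [_ Hy] := mem_chain_stage y.
by rewrite /generic_inv generic_map_nth ?nth_index // size_chain index_mem.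
Qed.

Lemma generic_map_F i (u : (b i).-tuple nat) : F (map_tuple generic_map u) <-> F u.
Proof.
set N := \max_(x <- u) stage x.
have HuN x : x \in u -> x \in (chain N).1.
  move=> Hx; have /andP [Hpre _] := chain_mono (leq_bigmax_seq (F := stage) _ Hx erefl).
  exact: mem_prefix Hpre (mem_chain_stage x).1.
pose pi := map_tuple (index^~ (chain N).1) u.
have Hpi : all (fun j => j < size (chain N).1) pi.
  by apply/allP => j /mapP [x /HuN Hx ->]; rewrite index_mem.
have [_ [_ HF]] := bf_equiv_atomic (chain_cond N).
have <- : map_tuple (nth 0 (chain N).1) pi = u.
  apply: val_inj; rewrite /= -map_comp -[RHS]map_id.
  by apply/eq_in_map => x /HuN Hx /=; rewrite nth_index.
have <- : map_tuple (nth 0 (chain N).2) pi =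
          map_tuple generic_map (map_tuple (nth 0 (chain N).1) pi).
  apply: val_inj; rewrite /= -!map_comp; apply/eq_in_map => x /HuN Hx /=.
  by rewrite generic_map_nth // index_mem.
by rewrite HF.
Qed.

End GenericChain.

Lemma generic_Aut (D : nat -> seq nat -> seq nat -> Prop) : (forall n, dense (D n)) ->
  forall xs ys, cond xs ys -> exists g, [/\ in_Aut F g, map g xs = ys & forall n, meets g (D n)].
Proof.
move=> D_dense xs ys Hc; exists (generic_map D_dense xs ys); split.
- exact: in_AutP (generic_mapK D_dense Hc) (generic_invK D_dense Hc) (generic_map_F D_dense Hc).
- exact: (map_generic_map D_dense Hc 0).
- move=> n; exists (chain D_dense xs ys (pickle (inl n : nat + nat)).+1).1.
  have := chain_requirement D_dense Hc (pickle (inl n : nat + nat)).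
  by rewrite /requirement pickleK map_generic_map.
Qed.

(** * Forcing *)

Definition embeds (xs ys xs' ys' : seq nat) :=
  exists2 pi, all (fun j => j < size xs') pi & map (nth 0 xs') pi = xs /\ map (nth 0 ys') pi = ys.

Lemma embeds_catr xs ys a vs : size xs = size ys -> size a = size vs ->
  embeds a vs (xs ++ a) (ys ++ vs).
Proof.
move=> Hs Ha; exists (iota (size xs) (size a)).
  by apply/allP => j; rewrite mem_iota size_cat => /andP [].
split; apply: (@eq_from_nth _ 0); rewrite size_map size_iota ?Ha // => j Hj.
  by rewrite (nth_map 0) ?size_iota // nth_iota // nth_cat ltnNge leq_addr addKn.
by rewrite (nth_map 0) ?size_iota ?Ha // nth_iota // Hs nth_cat ltnNge leq_addr addKn.
Qed.

Lemma embeds_cat xs ys xs' ys' a vs : size xs' = size ys' ->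
  embeds xs ys xs' ys' -> embeds xs ys (xs' ++ a) (ys' ++ vs).
Proof.
move=> Hs [pi Hpi [<- <-]]; exists pi.
  by apply/allP => j /(allP Hpi) Hj; rewrite size_cat ltn_addr.
by split; apply/eq_in_map => j /(allP Hpi) Hj; rewrite nth_cat ?Hj // -Hs Hj.
Qed.

Lemma cond_cat xs ys xs' ys' : cond xs' ys' -> embeds xs ys xs' ys' -> cond (xs ++ xs') (ys ++ ys').
Proof.
move=> Hc [pi Hpi [E1 E2]]; have Hs := bf_equiv_size Hc.
have Hall : all (fun j => j < size xs') (pi ++ iota 0 (size xs')).
  by rewrite all_cat Hpi; apply/allP => j; rewrite mem_iota.
move: (bf_equiv_reindex Hc Hall); rewrite !map_cat E1 E2.
by rewrite map_nth_iota0 // take_size Hs map_nth_iota0 // take_size.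
Qed.

Definition upward_closed (R : seq nat -> seq nat -> Prop) :=
  forall xs ys xs' ys', cond xs' ys' -> embeds xs ys xs' ys' -> R xs ys -> R xs' ys'.

Definition every_ext (R : seq nat -> seq nat -> Prop) xs ys :=
  forall a vs, size vs = size a -> cond (xs ++ a) (ys ++ vs) -> R (xs ++ a) (ys ++ vs).

Lemma upward_every_ext_not R :
  upward_closed R -> upward_closed (every_ext (fun xs ys => ~ R xs ys)).
Proof.
move=> HR xs ys xs' ys' Hc' Hemb HnR a vs Hv Ha Hra.
have Hs' := bf_equiv_size Hc'.
have Hs : size (xs' ++ a) = size (ys' ++ vs) by rewrite !size_cat Hs' Hv.
have Hc : cond (xs ++ xs' ++ a) (ys ++ ys' ++ vs) by apply: cond_cat => //; apply: embeds_cat.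
apply: (HnR (xs' ++ a) (ys' ++ vs)); rewrite ?size_cat ?Hs' ?Hv //.
apply: HR Hra => //; apply: embeds_catr => //.
by case: Hemb => pi _ [<- <-]; rewrite !size_map.
Qed.

Definition every_conjunct (xs : seq nat) (P : seq nat -> form) (n : nat) : form :=
  if @unpickle (seq nat) n is Some a then
    fAlls (size xs) (size a) (fImp (bf_formula lam (xs ++ a)) (P (xs ++ a)))
  else fTrue.

Definition some_disjunct (xs : seq nat) (P : seq nat -> form) (n : nat) : form :=
  if @unpickle (seq nat) n is Some a then
    fExs (size xs) (size a) (fAnd2 (bf_formula lam (xs ++ a)) (P (xs ++ a)))
  else fFalse.

Definition fEvery xs P := fAnd (every_conjunct xs P).
Definition fSome xs P := fOr (some_disjunct xs P).

Lemma bounded_fEvery xs P : (forall a, bounded (size (xs ++ a)) (P (xs ++ a))) ->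
  bounded (size xs) (fEvery xs P).
Proof.
move=> HP; apply: bounded_And => n; rewrite /every_conjunct.
case: unpickle => [a | ]; last exact: bounded_True.
by apply/bounded_Alls/bounded_Imp; rewrite -size_cat ?HP //; apply: bounded_bf_formula.
Qed.

Lemma bounded_fSome xs P : (forall a, bounded (size (xs ++ a)) (P (xs ++ a))) ->
  bounded (size xs) (fSome xs P).
Proof.
move=> HP; apply: bounded_Or => n; rewrite /some_disjunct.
case: unpickle => [a | ]; last exact: bounded_False.
by apply/bounded_Exs/bounded_And2; rewrite -size_cat ?HP //; apply: bounded_bf_formula.
Qed.

Lemma sat_fEvery M xs ys P : size ys = size xs ->
  sat M (env ys) (fEvery xs P) <-> every_ext (fun xs' ys' => sat M (env ys') (P xs')) xs ys.
Proof.
move=> Hs; have Hs' a vs : size vs = size a -> size (ys ++ vs) = size (xs ++ a).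
  by move=> Hv; rewrite !size_cat Hs Hv.
split=> [/sat_And H a vs Hv | H]; last apply/sat_And => n.
  move: (H (pickle a)); rewrite /every_conjunct pickleK -Hs sat_Alls => /(_ vs Hv).
  by rewrite sat_Imp (sat_bf_formula _ _ (Hs' a vs Hv)) => HP /HP.
rewrite /every_conjunct; case: unpickle => [a | ] //; rewrite -Hs sat_Alls => vs Hv.
by rewrite sat_Imp (sat_bf_formula _ _ (Hs' a vs Hv)); apply: H.
Qed.

Lemma sat_fSome M xs ys P : size ys = size xs ->
  sat M (env ys) (fSome xs P) <->
  exists a vs, [/\ size vs = size a, cond (xs ++ a) (ys ++ vs)
                  & sat M (env (ys ++ vs)) (P (xs ++ a))].
Proof.
move=> Hs; have Hs' a vs : size vs = size a -> size (ys ++ vs) = size (xs ++ a).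
  by move=> Hv; rewrite !size_cat Hs Hv.
split=> [/sat_Or [n] | [a [vs [Hv Hc HP]]]].
  rewrite /some_disjunct; case: unpickle => [a | ]; last by move/sat_False.
  rewrite -Hs sat_Exs => -[vs [Hv]].
  by rewrite sat_And2 (sat_bf_formula _ _ (Hs' a vs Hv)) => -[]; exists a, vs.
apply/sat_Or; exists (pickle a); rewrite /some_disjunct pickleK -Hs sat_Exs; exists vs; split=> //.
by rewrite sat_And2 (sat_bf_formula _ _ (Hs' a vs Hv)).
Qed.

Definition forcing_relation M (B : X ar -> Prop) (P : seq nat -> seq nat -> Prop) :=
  upward_closed P /\ exists D : nat -> seq nat -> seq nat -> Prop, (forall n, dense (D n)) /\
    forall g, in_Aut F g -> (forall n, meets g (D n)) ->
      B (pullback g M) <-> exists xs, P xs (map g xs).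

(** The formulas [Psi xs] are the Vaught transforms of [B]. *)
Definition forceable (B : X ar -> Prop) :=
  exists Psi : seq nat -> form, (forall xs, bounded (size xs) (Psi xs)) /\
    forall M, exists P, (forall xs ys, cond xs ys -> sat M (env ys) (Psi xs) <-> P xs ys) /\
      forcing_relation M B P.

Lemma dense_True : dense (fun _ _ => True).
Proof. by move=> xs ys Hc; exists [::], [::]; rewrite !cats0. Qed.

Definition req_join (Ds : nat -> nat -> seq nat -> seq nat -> Prop) (n : nat) :=
  if @unpickle (nat * nat)%type n is Some (i, j) then Ds i j else fun _ _ => True.

Lemma dense_join Ds : (forall i j, dense (Ds i j)) -> forall n, dense (req_join Ds n).
Proof.
by move=> HD n; rewrite /req_join; case: unpickle => [[i j] | ]; [apply: HD | apply: dense_True].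
Qed.

Lemma meets_join g Ds : (forall n, meets g (req_join Ds n)) -> forall i j, meets g (Ds i j).
Proof. by move=> H i j; move: (H (pickle (i, j))); rewrite /req_join pickleK. Qed.

Lemma dense_decide P : dense (fun xs ys => P xs ys \/ every_ext (fun a b => ~ P a b) xs ys).
Proof.
move=> xs ys Hc.
case: (classic (exists a vs, cond (xs ++ a) (ys ++ vs) /\ P (xs ++ a) (ys ++ vs))).
  by move=> [a [vs [Hc' HP]]]; exists a, vs; split=> //; left.
move=> Hn; exists [::], [::]; rewrite !cats0; split=> //; right.
by move=> a vs _ Ha HP; apply: Hn; exists a, vs.
Qed.

Lemma Aut_not_forces_both g P xs xs' : in_Aut F g -> upward_closed P ->
  P xs (map g xs) -> every_ext (fun a b => ~ P a b) xs' (map g xs') -> False.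
Proof.
move=> Hg HP HPx Hnot.
have Hc : cond (xs' ++ xs) (map g xs' ++ map g xs) by rewrite -map_cat; apply: bf_equiv_Aut.
apply: (Hnot xs (map g xs)); rewrite ?size_map //.
by apply: HP HPx => //; apply: embeds_catr; rewrite ?size_map.
Qed.

Lemma forceable_compl B : forceable B -> forceable (fun M => ~ B M).
Proof.
move=> [Psi [HPsi Hforce]].
exists (fun xs => fEvery xs (fun xs' => fNot (Psi xs'))); split.
  by move=> xs; apply: bounded_fEvery => a; apply: bounded_Not.
move=> M; have [P [HP [HPup [D [HD Htruth]]]]] := Hforce M.
exists (every_ext (fun xs ys => ~ P xs ys)); split.
  move=> xs ys Hc; rewrite sat_fEvery ?(bf_equiv_size Hc) //.
  by split=> H a vs Hv Hc' HPa; apply: (H a vs Hv Hc'); apply/(HP _ _ Hc').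
split; first exact: upward_every_ext_not.
pose Q xs ys := P xs ys \/ every_ext (fun a b => ~ P a b) xs ys.
exists (fun n => if n is n'.+1 then D n' else Q); split=> [[|n] | g Hg Hmeets].
- exact: dense_decide.
- exact: HD.
have [xs HQ] := Hmeets 0; have Hgen := Htruth g Hg (fun n => Hmeets n.+1).
split=> [HnB | [xs' Hxs'] /Hgen [xs2 H2]].
  by case: HQ => [HPx | Hnot]; [case: HnB; apply/Hgen; exists xs | exists xs].
exact: Aut_not_forces_both Hg HPup H2 Hxs'.
Qed.

Lemma forceable_cunion (Bs : nat -> X ar -> Prop) :
  (forall n, forceable (Bs n)) -> forceable (fun M => exists n, Bs n M).
Proof.
move=> HB; have [Psi HPsi] := choice _ HB.
exists (fun xs => fOr (fun n => Psi n xs)); split.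
  by move=> xs; apply: bounded_Or => n; case: (HPsi n).
move=> M; have [P HP] := choice _ (fun n => (HPsi n).2 M).
have [D HD] := choice _ (fun n => (HP n).2.2).
exists (fun xs ys => exists n, P n xs ys); split.
  by move=> xs ys Hc; rewrite sat_Or; split=> -[n Hn]; exists n; apply/((HP n).1 _ _ Hc).
split; first by move=> xs ys xs' ys' Hc' Hemb [n Hn]; exists n; apply: (HP n).2.1 Hn.
exists (req_join D); split; first by apply: dense_join => i; case: (HD i).
move=> g Hg /meets_join Hmeets; split=> [[n] | [xs [n]]].
  by move=> /((HD n).2 g Hg (Hmeets n)) [xs Hxs]; exists xs, n.
by move=> Hxs; exists n; apply/((HD n).2 g Hg (Hmeets n)); exists xs.
Qed.

(** * Open sets *)

(** Signed atoms whose arguments are positions, to be filled by an assignment. *)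
Definition pattern := seq (coord ar * bool).

Definition pattern_holds (M : X ar) (s : nat -> nat) (d : pattern) :=
  forall p, List.In p d -> M (projT1 p.1) (map_tuple s (projT2 p.1)) <-> p.2.

Definition pattern_below (k : nat) (d : pattern) :=
  forall p, List.In p d -> all (fun j => j < k) (projT2 p.1).

Definition pattern_map (f : nat -> nat) (d : pattern) : pattern :=
  List.map (fun p => (existT _ (projT1 p.1) (map_tuple f (projT2 p.1)), p.2)) d.

Lemma pattern_holds_map M s f (d : pattern) :
  pattern_holds M s (pattern_map f d) <-> pattern_holds M (s \o f) d.
Proof.
split=> H p Hp; first by have := H _ (List.in_map _ _ _ Hp); rewrite /= map_tuple_comp.
by have [q [<- Hq]] := proj1 (List.in_map_iff _ _ _) Hp; rewrite /= map_tuple_comp; apply: H.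
Qed.

Lemma pattern_holds_eq M s s' (d : pattern) : (forall p, List.In p d -> {in projT2 p.1, s =1 s'}) ->
  pattern_holds M s d <-> pattern_holds M s' d.
Proof.
move=> Hss'; suff E p : List.In p d -> map_tuple s (projT2 p.1) = map_tuple s' (projT2 p.1).
  by split=> H p Hp; move: (H p Hp); rewrite (E p Hp).
by move=> /Hss' Hp; apply: val_inj; apply/eq_in_map.
Qed.

Definition literal (p : coord ar * bool) : form :=
  let atom := @fRel I ar b (projT1 p.1) (projT2 p.1) in if p.2 then atom else fNot atom.

Fixpoint pattern_formula (d : pattern) : form :=
  if d is p :: d' then fAnd2 (literal p) (pattern_formula d') else fTrue.

Lemma sat_literal M s p :
  sat M s (literal p) <-> (M (projT1 p.1) (map_tuple s (projT2 p.1)) <-> p.2).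
Proof.
rewrite /literal; case: p.2 => /=; first by split=> [H | [_ H]]; [split | apply: H].
by split=> [H | [H _] /H //]; split=> // /H.
Qed.

Lemma sat_pattern_formula M s (d : pattern) : sat M s (pattern_formula d) <-> pattern_holds M s d.
Proof.
elim: d => [|p d IH]; first by split=> // _ p [].
rewrite [pattern_formula _]/= sat_And2 sat_literal IH.
by split=> [[Hp Hd] q [<- | /Hd] // | H]; split=> [|q Hq]; apply: H; [left | right].
Qed.

Lemma bounded_pattern_formula k (d : pattern) : pattern_below k d -> bounded k (pattern_formula d).
Proof.
elim: d => [|p d IH] Hd; first exact: bounded_True.
apply: bounded_And2; last by apply: IH => q Hq; apply: Hd; right.
by rewrite /literal; case: p.2; [ | apply: bounded_Not]; apply: bounded_Rel; apply: Hd; left.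
Qed.

Section Open.
Variable U : X ar -> Prop.
Hypothesis U_open : is_open U.
Variable enum_pattern : nat -> option pattern.
Hypothesis enum_patternP : forall d, exists n, enum_pattern n = Some d.

Definition pattern_in (xs : seq nat) (d : pattern) :=
  pattern_below (size xs) d /\ forall M, pattern_holds M (env xs) d -> U M.

Definition basic M xs ys := exists2 d, pattern_in xs d & pattern_holds M (env ys) d.

Definition basic_disjunct xs n : form :=
  if enum_pattern n is Some d then
    if excluded_middle_informative (pattern_in xs d) then pattern_formula d else fFalse
  else fFalse.

Definition basic_formula xs := fOr (basic_disjunct xs).

Lemma bounded_basic_formula xs : bounded (size xs) (basic_formula xs).
Proof.
apply: bounded_Or => n; rewrite /basic_disjunct.
case: enum_pattern => [d | ]; last exact: bounded_False.
case: excluded_middle_informative => [[Hd _] | _] /=; last exact: bounded_False.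
exact: bounded_pattern_formula.
Qed.

Lemma sat_basic_formula M xs ys : sat M (env ys) (basic_formula xs) <-> basic M xs ys.
Proof.
split=> [/sat_Or [n] | [d Hd Hhold]].
  rewrite /basic_disjunct; case: enum_pattern => [d | ]; last by move/sat_False.
  case: excluded_middle_informative => [Hd | _] /=; last by move/sat_False.
  by rewrite sat_pattern_formula; exists d.
have [n Hn] := enum_patternP d; apply/sat_Or; exists n.
rewrite /basic_disjunct Hn; case: excluded_middle_informative => //= _.
by rewrite sat_pattern_formula.
Qed.

Lemma upward_basic M : upward_closed (basic M).
Proof.
move=> xs ys xs' ys' _ [pi Hpi [<- <-]] [d [Hbelow HU] Hhold].
have env_map zs p : List.In p d -> {in projT2 p.1, env (map (nth 0 zs) pi) =1 env zs \o nth 0 pi}.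
  move=> /Hbelow Hp j /(allP Hp); rewrite size_map => Hj.
  by rewrite /env /= (nth_map 0).
exists (pattern_map (nth 0 pi) d).
  split=> [p | N]; last by rewrite pattern_holds_map -(pattern_holds_eq _ (env_map _)) => /HU.
  move=> /(proj1 (List.in_map_iff _ _ _)) [q [<- /Hbelow Hq]] /=.
  apply/allP => x /mapP [j /(allP Hq) Hj ->]; rewrite size_map in Hj.
  by apply: (allP Hpi); apply: mem_nth.
by rewrite pattern_holds_map -(pattern_holds_eq _ (env_map _)).
Qed.

Lemma basic_open M xs : basic M xs xs -> U M.
Proof. by case=> d [_ HU] /HU. Qed.

Lemma open_basic M : U M -> exists xs, basic M xs xs.
Proof.
move=> /U_open [l Hl].
pose xs := flatten [seq val (projT2 q) | q : coord ar <- l].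
have in_xs q x : List.In q l -> x \in val (projT2 q) -> x \in xs.
  elim: l {Hl} @xs => [|q' l IH] //= [-> | Hq] Hx; rewrite mem_cat ?Hx //.
  by rewrite IH ?orbT.
pose truth (q : coord ar) : bool := excluded_middle_informative (M (projT1 q) (projT2 q)).
pose d : pattern := List.map (fun q => (q, truth q)) l.
have index_K p : List.In p d -> {in projT2 p.1, env xs \o index^~ xs =1 id}.
  move=> /(proj1 (List.in_map_iff _ _ _)) [q [<- Hq]] x /(in_xs _ _ Hq) Hx /=.
  by rewrite /env nth_index.
have holds_d N : pattern_holds N (env xs) (pattern_map (index^~ xs) d) <->
    forall q, List.In q l -> N (projT1 q) (projT2 q) <-> M (projT1 q) (projT2 q).
  rewrite pattern_holds_map (pattern_holds_eq _ index_K); split=> H q Hq.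
    move: (H _ (List.in_map _ _ _ Hq)); rewrite /= map_tuple_id /truth.
    by case: excluded_middle_informative => HM /= ->.
  have [q' [<- Hq']] := proj1 (List.in_map_iff _ _ _) Hq; rewrite /= map_tuple_id H // /truth.
  by case: excluded_middle_informative.
exists xs, (pattern_map (index^~ xs) d); last exact/holds_d.
split=> [p | N /holds_d]; last exact: Hl.
move=> /(proj1 (List.in_map_iff _ _ _)) [p' [<- /(proj1 (List.in_map_iff _ _ _)) [q [<- Hq]]]] /=.
by apply/allP => j /mapP [x Hx ->]; rewrite index_mem (in_xs q).
Qed.

Lemma pattern_holds_pullback g M s (d : pattern) :
  pattern_holds (pullback g M) s d <-> pattern_holds M (g \o s) d.
Proof. by split=> H p /H; rewrite /pullback map_tuple_comp. Qed.

Lemma basic_pullback g M xs : basic (pullback g M) xs xs <-> basic M xs (map g xs).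
Proof.
suff E d : pattern_below (size xs) d ->
    pattern_holds (pullback g M) (env xs) d <-> pattern_holds M (env (map g xs)) d.
  by split=> -[d Hd Hhold]; exists d => //; apply/E => //; case: Hd.
move=> Hd; rewrite pattern_holds_pullback; apply: pattern_holds_eq => p /Hd Hp j /(allP Hp) Hj.
by rewrite /env /= (nth_map 0).
Qed.

Lemma forceable_open : forceable U.
Proof.
exists basic_formula; split; first exact: bounded_basic_formula.
move=> M; exists (basic M); split; first by move=> xs ys _; apply: sat_basic_formula.
split; first exact: upward_basic.
exists (fun _ _ _ => True); split=> [_ | g _ _]; first exact: dense_True.
split=> [/open_basic [xs] | [xs]].
  by rewrite basic_pullback; exists xs.
by rewrite -basic_pullback; apply: basic_open.
Qed.

End Open.

Lemma Borel_forceable (enum_pattern : nat -> option pattern) :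
  (forall d, exists n, enum_pattern n = Some d) -> forall A, Borel A -> forceable A.
Proof.
move=> enumP A; elim=> [U HU | B _ | Bs _].
- exact: (forceable_open HU enumP).
- exact: forceable_compl.
- exact: forceable_cunion.
Qed.

Lemma forceable_definable A : forceable A -> Aut_invariant F A -> definable F A.
Proof.
move=> [Psi [HPsi Hforce]] HA; exists (fSome [::] Psi); split.
  by move=> x /(bounded_fSome (xs := [::]) HPsi).
move=> M; have [P [HP [_ [D [HD Htruth]]]]] := Hforce M.
rewrite /models (_ : (fun _ => 0) = env [::]); last by apply: functional_extensionality => -[|j].
rewrite sat_fSome //; split=> [HAM | [xs [ys [_ Hc HPsi_xs]]]].
  have [g [Hg _ Hmeets]] := generic_Aut HD (bf_equiv_Aut lam [::] Aut_id).
  have [xs Hxs] := (Htruth g Hg Hmeets).1 ((Aut_invariant_pullback M HA Hg).2 HAM).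
  have Hc := bf_equiv_Aut lam xs Hg.
  by exists xs, (map g xs); split; rewrite ?size_map //; apply/HP.
have [g [Hg Hxy Hmeets]] := generic_Aut HD Hc.
apply/(Aut_invariant_pullback M HA Hg)/(Htruth g Hg Hmeets); exists xs.
by rewrite Hxy; apply/HP.
Qed.

End Forcing.

Lemma pattern_enumeration : countable_type I ->
  exists enum : nat -> option pattern, forall d, exists n, enum n = Some d.
Proof.
case=> enc enc_inj.
pose code (p : coord ar * bool) := (enc (projT1 p.1), val (projT2 p.1), p.2).
have code_inj : injective code.
  move=> [[R u] c] [[R' u'] c'] [/enc_inj ER Eu Ec] /=; subst R' c'.
  by rewrite (val_inj Eu).
pose codes (d : pattern) := pickle [seq code p | p <- d].
have codes_inj : injective codes by move=> d d' /(pcan_inj pickleK) /(inj_map code_inj).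
exists (fun n => if excluded_middle_informative (exists d, codes d = n) is left H
  then Some (proj1_sig (constructive_indefinite_description _ H)) else None).
move=> d; exists (codes d); case: excluded_middle_informative => [H | []]; last by exists d.
by congr Some; apply: codes_inj; rewrite (proj2_sig (constructive_indefinite_description _ H)).
Qed.

End Vaught.

Theorem proposition6
  (I : Type) (ar : I -> nat) (HI : countable_type I)
  (b : nat -> nat) (F : forall i : nat, (b i).-tuple nat -> Prop)
  (A : X ar -> Prop) :
  Borel A -> Aut_invariant F A -> definable F A.
Proof.
move=> HB HA.
have [lam lam_stable] := bf_equiv_stable F.
have [enum enumP] := pattern_enumeration ar HI.
exact: (forceable_definable lam_stable (Borel_forceable F lam enumP HB) HA).
Qed.
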